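(* Let $V=[\alpha_1,\beta_1]\times\dots\times[\alpha_d,\beta_d]$ be an axis-parallel box in $\mathbb{R}^d$ and let $\mathcal{G}_1,\dots,\mathcal{G}_n$ be non-empty collections of axis-parallel boxes in $\mathbb{R}^d$ such that (i) for every $i\in[n]$, every $B\in\mathcal{G}_i$ and every $j\in[d]$, $\Pi_j(B)\cap\{\alpha_j,\beta_j\}\neq\emptyset$ (so $B$ contains at least one vertex of $V$), and (ii) every colorful $n$-tuple is hit by at least one diagonally opposite pair of vertices of $V$. Let $(V_1,\dots,V_r)$, with $r<n$, be a colorful $r$-tuple such that there are at most $2^k$, with $k<d$, distinct diagonally opposite pairs of vertices of $V$ each of which hits $(V_1,\dots,V_r)$. Then at least one of the following holds: Option 1: for every diagonally opposite pair $(\lambda,\lambda')$ of vertices of $V$ hitting $(V_1,\dots,V_r)$ and every family $\mathcal{G}_i$ with $V_k\notin\mathcal{G}_i$ for all $k\in[r]$, the family $\mathcal{G}_i$ is hit by $\{\lambda,\lambda'\}$; Option 2: there exist $i\in[n]$ and $V_{r+1}\in\mathcal{G}_i$ such that $(V_1,\dots,V_r,V_{r+1})$ is a colorful tuple and there are at most $2^{k-1}$ distinct diagonally opposite pairs of vertices of $V$ each of which hits $(V_1,\dots,V_r,V_{r+1})$.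
   Context: For a box $B=[\alpha_1,\beta_1]\times\dots\times[\alpha_d,\beta_d]$, $\Pi_j(B)=[\alpha_j,\beta_j]$. A vertex of $V$ is a point $(\lambda_1,\dots,\lambda_d)$ with $\lambda_j\in\{\alpha_j,\beta_j\}$ for all $j$; vertices $\lambda,\lambda'$ are diagonally opposite if $\{\lambda_j,\lambda'_j\}=\{\alpha_j,\beta_j\}$ for all $j$. A set of points hits a tuple or family of boxes if every box contains at least one of the points. Given families $\mathcal{G}_1,\dots,\mathcal{G}_n$, a colorful $t$-tuple is $(C_1,\dots,C_t)$ with $C_j\in\mathcal{G}_{i_j}$ for pairwise distinct indices $i_1,\dots,i_t\in[n]$. *)

From HB Require Import structures.
From mathcomp Require Import all_boot all_order all_algebra.
From mathcomp Require Import finmap.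
Set Implicit Arguments. Unset Strict Implicit. Unset Printing Implicit Defensive.
Import Order.TTheory GRing.Theory Num.Theory.
Local Open Scope ring_scope.
Local Open Scope fset_scope.

(* A (closed) axis-parallel box in R^d: coordinate j gives [fst, snd]. *)
Definition box (R : realFieldType) (d : nat) := 'I_d -> R * R.

Definition point (R : realFieldType) (d : nat) := {ffun 'I_d -> R}.

Definition in_box (R : realFieldType) (d : nat) (x : point R d) (B : box R d) : bool :=
  [forall j, ((B j).1 <= x j) && (x j <= (B j).2)].

(* Vertices of V = prod [a j, b j], indexed by sign vectors s. *)
Definition vertex (R : realFieldType) (d : nat) (a b : 'I_d -> R)
  (s : {ffun 'I_d -> bool}) : point R d := [ffun j => if s j then b j else a j].

Definition opp_sign (d : nat) (s : {ffun 'I_d -> bool}) : {ffun 'I_d -> bool} :=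
  [ffun j => ~~ s j].

Definition diag_pair (R : realFieldType) (d : nat) (a b : 'I_d -> R)
  (s : {ffun 'I_d -> bool}) : {fset point R d} :=
  [fset vertex a b s; vertex a b (opp_sign s)].

Definition pair_hits (R : realFieldType) (d t : nat) (a b : 'I_d -> R)
  (s : {ffun 'I_d -> bool}) (C : 'I_t -> box R d) : bool :=
  [forall i, in_box (vertex a b s) (C i) || in_box (vertex a b (opp_sign s)) (C i)].

Definition n_hitting_pairs (R : realFieldType) (d t : nat) (a b : 'I_d -> R)
  (C : 'I_t -> box R d) : nat :=
  size (undup [seq diag_pair a b s | s <- enum {: {ffun 'I_d -> bool}} & pair_hits a b s C]).

Definition colorful (R : realFieldType) (d n t : nat) (G : 'I_n -> box R d -> Prop)
  (C : 'I_t -> box R d) : Prop :=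
  exists f : 'I_t -> 'I_n, injective f /\ forall j, G (f j) (C j).

Definition ext_tuple (R : realFieldType) (d r : nat) (C : 'I_r -> box R d) (B : box R d)
  : 'I_r.+1 -> box R d :=
  fun j => match unlift ord_max j with Some j' => C j' | None => B end.

(* If Option 1 fails, some pair {λ, λ'} hits (V_1, ..., V_r) but misses a box B
   of a family G_i disjoint from the tuple, and appending B gives a colorful
   tuple.  The vertices of V lying in a box
   are closed under the coordinatewise ternary xor, hence so are the sign
   vectors whose pair hits a given box.  Fix t whose pair hits the extended
   tuple and s the sign vector of λ: the involution x ↦ x ⊕ t ⊕ s maps pairs
   hitting the extended tuple to pairs hitting (V_1, ..., V_r) but missing B
   (otherwise x ⊕ (x ⊕ t ⊕ s) ⊕ t = s would hit B).  So at most half of the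
   pairs hitting (V_1, ..., V_r) survive. *)

From HB Require Import structures.
From mathcomp Require Import all_boot all_order all_algebra.
From mathcomp Require Import finmap.
From Stdlib Require Import Classical.
Set Implicit Arguments. Unset Strict Implicit. Unset Printing Implicit Defensive.

Section CardImage.
Variables (T : finType) (U : eqType).

Definition card_img (f : T -> U) (P : pred T) : nat :=
  size (undup [seq f x | x <- enum T & P x]).

Lemma card_img_le (f g : T -> U) (P Q : pred T) :
  (forall x, P x -> exists2 y, Q y & f x = g y) -> (card_img f P <= card_img g Q)%N.
Proof.
move=> PQ; apply: uniq_leq_size; first exact: undup_uniq.
move=> z; rewrite !mem_undup => /mapP[x]; rewrite mem_filter => /andP[Px _] ->.
by have [y Qy ->] := PQ x Px; apply: map_f; rewrite mem_filter Qy mem_enum.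
Qed.

Lemma card_img_comp_le (f g : T -> U) (P : pred T) :
  {in P &, forall x y, g x = g y -> f x = f y} -> (card_img f P <= card_img g P)%N.
Proof.
move=> fg; rewrite /card_img; elim: (enum T) => [//|x e IHe] /=.
case: ifP => Px //=; case: ifP => fx; case: ifP => gx /=.
- exact: IHe.
- exact: leqW.
- case/mapP: gx => y yPe gxy.
  have Py : P y by move: yPe; rewrite mem_filter => /andP[].
  by rewrite (fg x y) // map_f in fx.
- exact: IHe.
Qed.

Lemma card_img_split (f : T -> U) (P Q : pred T) :
  {subset Q <= P} -> {in P &, forall x y, f x = f y -> Q x = Q y} ->
  (card_img f Q + card_img f (predD P Q) <= card_img f P)%N.
Proof.
move=> QP Qsat; rewrite -size_cat; apply: uniq_leq_size.
  rewrite cat_uniq !undup_uniq andbT /=; apply/hasPn => z.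
  rewrite !mem_undup => /mapP[x]; rewrite mem_filter => /andP[/andP[nQx Px] _] ->.
  apply/mapP => -[y]; rewrite mem_filter => /andP[Qy _] fxy.
  by move: nQx; rewrite (Qsat x y Px (QP y Qy) fxy) Qy.
move=> z; rewrite mem_cat !mem_undup => /orP[] /mapP[x]; rewrite mem_filter mem_enum andbT.
  by move=> Qx ->; rewrite map_f // mem_filter mem_enum andbT; apply: QP.
by move=> /andP[_ Px] ->; rewrite map_f // mem_filter mem_enum andbT.
Qed.

Lemma card_img_half (f : T -> U) (P Q : pred T) (phi : T -> T) :
  {subset Q <= P} -> {in P &, forall x y, f x = f y -> Q x = Q y} ->
  (forall x, Q x -> P (phi x) && ~~ Q (phi x)) ->
  {in Q &, forall x y, f (phi x) = f (phi y) -> f x = f y} ->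
  (2 * card_img f Q <= card_img f P)%N.
Proof.
move=> QP Qsat phiQ phi_inj; apply: leq_trans (card_img_split QP Qsat).
rewrite mul2n -addnn leq_add2l; apply: leq_trans (card_img_comp_le phi_inj) _.
by apply: card_img_le => x Qx; exists (phi x); rewrite //= andbC phiQ.
Qed.

End CardImage.

Section SignVectors.
Variable d : nat.
Implicit Types (e : bool) (s t u v w : {ffun 'I_d -> bool}).

Definition xor3 u v w : {ffun 'I_d -> bool} := [ffun j => u j (+) v j (+) w j].

Definition signflip e s := if e then opp_sign s else s.

Lemma opp_signK : involutive (@opp_sign d).
Proof. by move=> s; apply/ffunP => j; rewrite !ffunE negbK. Qed.

Lemma xor3K u v w : xor3 (xor3 u v w) v w = u.
Proof. by apply/ffunP => j; rewrite !ffunE; case: (u j) (v j) (w j) => [] [] []. Qed.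

Lemma xor3KV u v w : xor3 u v (xor3 u v w) = w.
Proof. by apply/ffunP => j; rewrite !ffunE; case: (u j) (v j) (w j) => [] [] []. Qed.

Lemma opp_sign_xor3 u v w : opp_sign (xor3 u v w) = xor3 (opp_sign u) v w.
Proof. by apply/ffunP => j; rewrite !ffunE; case: (u j) (v j) (w j) => [] [] []. Qed.

Lemma xor3_signflip e1 e2 e3 u1 u2 u3 :
  xor3 (signflip e1 u1) (signflip e2 u2) (signflip e3 u3) =
  signflip (e1 (+) e2 (+) e3) (xor3 u1 u2 u3).
Proof.
apply/ffunP => j; case: e1 e2 e3 => [] [] [] /=; rewrite !ffunE;
by case: (u1 j) (u2 j) (u3 j) => [] [] [].
Qed.

End SignVectors.

Section VertexHits.
Variables (R : realFieldType) (d : nat) (a b : 'I_d -> R).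
Implicit Types (s t u v : {ffun 'I_d -> bool}) (B : box R d).

Definition hits_box s B :=
  in_box (vertex a b s) B || in_box (vertex a b (opp_sign s)) B.

Lemma hits_boxP s B :
  reflect (exists e, in_box (vertex a b (signflip e s)) B) (hits_box s B).
Proof.
by apply: (iffP orP) => [[] Hs | [[] Hs]]; [exists false | exists true | right | left].
Qed.

(* Each coordinate of [xor3 u v w] is a coordinate of [u], [v] or [w]. *)
Lemma in_box_xor3 B u v w :
  in_box (vertex a b u) B -> in_box (vertex a b v) B -> in_box (vertex a b w) B ->
  in_box (vertex a b (xor3 u v w)) B.
Proof.
move=> /forallP Bu /forallP Bv /forallP Bw; apply/forallP => j.
move: (Bu j) (Bv j) (Bw j); rewrite !ffunE.
by case: (u j) (v j) (w j) => [] [] [].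
Qed.

Lemma hits_box_xor3 B u v w :
  hits_box u B -> hits_box v B -> hits_box w B -> hits_box (xor3 u v w) B.
Proof.
move=> /hits_boxP[e1 Bu] /hits_boxP[e2 Bv] /hits_boxP[e3 Bw]; apply/hits_boxP.
by exists (e1 (+) e2 (+) e3); rewrite -xor3_signflip in_box_xor3.
Qed.

Lemma pair_hits_xor3 m (C : 'I_m -> box R d) u v w :
  pair_hits a b u C -> pair_hits a b v C -> pair_hits a b w C ->
  pair_hits a b (xor3 u v w) C.
Proof.
move=> /forallP Cu /forallP Cv /forallP Cw; apply/forallP => i.
exact: hits_box_xor3 (Cu i) (Cv i) (Cw i).
Qed.

Lemma pair_hits_ext_tuple r (Vt : 'I_r -> box R d) B s :
  pair_hits a b s (ext_tuple Vt B) = pair_hits a b s Vt && hits_box s B.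
Proof.
apply/forallP/andP => [VBs | [/forallP Vs Bs] j].
  split; last by have := VBs ord_max; rewrite /ext_tuple unlift_none.
  by apply/forallP => j; have := VBs (lift ord_max j); rewrite /ext_tuple liftK.
by rewrite /ext_tuple; case: unliftP => [j' _|_]; [apply: Vs | apply: Bs].
Qed.

Lemma vertex_xor3_eq u v t s :
  vertex a b u = vertex a b v -> vertex a b (xor3 u t s) = vertex a b (xor3 v t s).
Proof.
move/ffunP => uv; apply/ffunP => j; move: (uv j); rewrite !ffunE.
by case: (u j) (v j) (t j) (s j) => [] [] [] [] //= ->.
Qed.

Lemma vertex_opp_sign_eq u v :
  vertex a b u = vertex a b v -> vertex a b (opp_sign u) = vertex a b (opp_sign v).
Proof.
move/ffunP => uv; apply/ffunP => j; move: (uv j); rewrite !ffunE.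
by case: (u j) (v j) => [] [] //= ->.
Qed.

(* Distinct sign vectors give the same vertex when some [a j = b j], so pairs
   are compared through their vertices, never through their sign vectors. *)
Lemma diag_pair_eqP u v :
  diag_pair a b u = diag_pair a b v <->
  vertex a b u = vertex a b v \/ vertex a b u = vertex a b (opp_sign v).
Proof.
split=> [uv | [] uv].
- have : vertex a b u \in diag_pair a b v by rewrite -uv in_fset2 eqxx.
  by rewrite in_fset2 => /orP[] /eqP; [left | right].
- by rewrite /diag_pair uv (vertex_opp_sign_eq uv).
- by rewrite /diag_pair uv (vertex_opp_sign_eq uv) opp_signK fsetUC.
Qed.

Lemma diag_pair_xor3 u v t s :
  diag_pair a b u = diag_pair a b v ->
  diag_pair a b (xor3 u t s) = diag_pair a b (xor3 v t s).
Proof.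
move/diag_pair_eqP => [] /(vertex_xor3_eq t s) uv; apply/diag_pair_eqP; first by left.
by right; rewrite opp_sign_xor3.
Qed.

Lemma pair_hits_diag_pair m (C : 'I_m -> box R d) u v :
  diag_pair a b u = diag_pair a b v -> pair_hits a b u C = pair_hits a b v C.
Proof.
move/diag_pair_eqP => [] uv; apply: eq_forallb => i;
  rewrite uv (vertex_opp_sign_eq uv) //.
by rewrite opp_signK orbC.
Qed.

Lemma n_hitting_pairs_ext_tuple r (Vt : 'I_r -> box R d) B s :
  pair_hits a b s Vt -> ~~ hits_box s B ->
  (2 * n_hitting_pairs a b (ext_tuple Vt B) <= n_hitting_pairs a b Vt)%N.
Proof.
move=> Vs Bs.
have [t VBt | no_pair] := pickP (pair_hits a b ^~ (ext_tuple Vt B)); last first.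
  by rewrite /n_hitting_pairs (eq_filter no_pair) filter_pred0.
have := VBt; rewrite pair_hits_ext_tuple => /andP[Vt_t _].
apply: (@card_img_half _ _ _ _ _ (fun x => xor3 x t s)).
- by move=> x; rewrite unfold_in /= pair_hits_ext_tuple => /andP[].
- by move=> x y _ _ /pair_hits_diag_pair ->.
- move=> x VBx; have := VBx; rewrite pair_hits_ext_tuple => /andP[Vx _].
  rewrite pair_hits_xor3 //=; apply: contra Bs => VBxts.
  by have := pair_hits_xor3 VBx VBt VBxts; rewrite xor3KV pair_hits_ext_tuple => /andP[].
- by move=> x y _ _ /(diag_pair_xor3 t s); rewrite !xor3K.
Qed.

End VertexHits.

Lemma colorful_ext_tuple (R : realFieldType) (d n r : nat) (G : 'I_n -> box R d -> Prop)
    (Vt : 'I_r -> box R d) i B :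
  colorful G Vt -> (forall j, ~ G i (Vt j)) -> G i B -> colorful G (ext_tuple Vt B).
Proof.
move=> [f [f_inj Gf]] Gi_new GiB.
exists (fun j => if unlift ord_max j is Some j' then f j' else i); split; last first.
  by move=> j; rewrite /ext_tuple; case: (unlift ord_max j).
move=> x y; case: (unliftP ord_max x) => [x' ->|->]; case: (unliftP ord_max y) => [y' ->|->];
  rewrite ?liftK ?unlift_none //.
- by move/f_inj ->.
- by move=> fi; case: (Gi_new x'); rewrite -fi.
- by move=> fi; case: (Gi_new y'); rewrite fi.
Qed.

Local Open Scope ring_scope.

Theorem lemma5 (R : realFieldType) (d n : nat) (a b : 'I_d -> R)
  (hab : forall j, a j <= b j)
  (G : 'I_n -> box R d -> Prop)
  (Gne : forall i, exists B, G i B)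
  (Hi : forall i B, G i B -> forall j, ((B j).1 <= a j <= (B j).2) || ((B j).1 <= b j <= (B j).2))
  (Hii : forall C : 'I_n -> box R d, colorful G C ->
           exists s : {ffun 'I_d -> bool}, pair_hits a b s C)
  (r : nat) (hr : (r < n)%N) (Vt : 'I_r -> box R d) (HV : colorful G Vt)
  (k : nat) (hk : (k < d)%N) (Hcount : (n_hitting_pairs a b Vt <= 2 ^ k)%N) :
  (forall s : {ffun 'I_d -> bool}, pair_hits a b s Vt ->
     forall i, (forall j, ~ G i (Vt j)) ->
       forall B, G i B -> in_box (vertex a b s) B || in_box (vertex a b (opp_sign s)) B)
  \/
  (exists i (B : box R d), G i B /\ colorful G (ext_tuple Vt B) /\
     (2 * n_hitting_pairs a b (ext_tuple Vt B) <= 2 ^ k)%N).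
Proof.
have [[s [i [B [Vs [Gi_new [GiB Bs]]]]]] | opt1] := classic (exists s i B,
  pair_hits a b s Vt /\ (forall j, ~ G i (Vt j)) /\ G i B /\ ~~ hits_box a b s B).
  right; exists i, B; split=> //; split; first exact: colorful_ext_tuple GiB.
  exact: leq_trans (n_hitting_pairs_ext_tuple Vs Bs) Hcount.
left=> s Vs i Gi_new B GiB; apply/negPn/negP => Bs.
by apply: opt1; exists s, i, B.
Qed.
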